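(* Let $G$ be a graph. If some graph in the LC orbit $[G]$ contains a clique of size $k\ge 1$, then $\lambda(G)\ge k-1$. Equivalently, every graph in $[G]$ has clique number at most $\lambda(G)+1$.
   Context: All graphs are finite, simple and undirected. For a graph $G=(V,E)$ and $v\in V$, let $N_v$ be the neighbourhood of $v$; the local complementation $G^v$ is obtained by complementing the subgraph induced on $N_v$. The LC orbit $[G]$ is the set of graphs obtainable from $G$ by finite sequences of local complementations. $\alpha(G)$ is the independence number of $G$ and $\lambda(G)=\max_{H\in[G]}\alpha(H)$. *)

From mathcomp Require Import all_boot.
Set Implicit Arguments. Unset Strict Implicit. Unset Printing Implicit Defensive.

(* A graph on the finite vertex type T, given by its adjacency (edge) indicator
   on ordered pairs.  It is a finite simple undirected graph when [simple g]. *)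
Definition graph (T : finType) := {ffun T * T -> bool}.

Definition adj (T : finType) (g : graph T) (x y : T) : bool := g (x, y).

Definition simple (T : finType) (g : graph T) : Prop :=
  (forall x, ~~ adj g x x) /\ (forall x y, adj g x y = adj g y x).

Definition nbhd (T : finType) (g : graph T) (v : T) : {set T} :=
  [set x | adj g v x].

Definition lc (T : finType) (g : graph T) (v : T) : graph T :=
  [ffun p : T * T =>
     if [&& p.1 != p.2, p.1 \in nbhd g v & p.2 \in nbhd g v]
     then ~~ g p else g p].

Definition lc_step (T : finType) : rel (graph T) :=
  fun g h => [exists v, h == lc g v].

Definition lc_orbit (T : finType) (g : graph T) : {set graph T} :=
  [set h | connect (@lc_step T) g h].

Definition independent (T : finType) (g : graph T) (S : {set T}) : bool :=
  [forall x in S, forall y in S, (x != y) ==> ~~ adj g x y].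

Definition clique (T : finType) (g : graph T) (S : {set T}) : bool :=
  [forall x in S, forall y in S, (x != y) ==> adj g x y].

Definition alpha (T : finType) (g : graph T) : nat :=
  \max_(S : {set T} | independent g S) #|S|.

Definition lambda (T : finType) (g : graph T) : nat :=
  \max_(h in lc_orbit g) alpha h.

(* Local complementation at a vertex v of a clique S complements every edge
   between two vertices of S \ v, since all of them lie in N_v; so S \ v
   becomes independent in a graph of the orbit. *)
From mathcomp Require Import all_boot.

Set Implicit Arguments.
Unset Strict Implicit.
Unset Printing Implicit Defensive.

Section LocalComplementation.

Variable T : finType.
Implicit Types (g h : graph T) (S : {set T}) (v x y : T).

Lemma lc_orbit_lc g h v : h \in lc_orbit g -> lc h v \in lc_orbit g.
Proof.
rewrite !inE => /connect_trans; apply; apply: connect1.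
by apply/existsP; exists v.
Qed.

Lemma cliqueP g S :
  clique g S -> forall x y, x \in S -> y \in S -> x != y -> adj g x y.
Proof.
move=> /forallP cS x y xS yS xy.
by move: (cS x); rewrite xS => /forallP /(_ y); rewrite yS xy.
Qed.

Lemma independentP g S :
  (forall x y, x \in S -> y \in S -> x != y -> ~~ adj g x y) ->
  independent g S.
Proof.
move=> indS; apply/forallP => x; apply/implyP => xS.
apply/forallP => y; apply/implyP => yS; apply/implyP; exact: indS.
Qed.

Lemma lc_clique_independent g S v :
  clique g S -> v \in S -> independent (lc g v) (S :\ v).
Proof.
move=> cS vS; apply: independentP => x y /setD1P [xv xS] /setD1P [yv yS] xy.
have vx : adj g v x by apply: (cliqueP cS); rewrite // eq_sym.
have vy : adj g v y by apply: (cliqueP cS); rewrite // eq_sym.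
rewrite /adj /lc ffunE /= xy !inE vx vy /=.
by rewrite negbK; apply: (cliqueP cS).
Qed.

Lemma independent_leq_alpha g S : independent g S -> #|S| <= alpha g.
Proof. exact: (@leq_bigmax_cond _ (independent g) (fun S => #|S|)). Qed.

Lemma alpha_leq_lambda g h : h \in lc_orbit g -> alpha h <= lambda g.
Proof. exact: leq_bigmax_cond. Qed.

End LocalComplementation.

Theorem mainTheorem3 (T : finType) (g : graph T) (k : nat) :
  simple g -> 1 <= k ->
  (exists2 h, h \in lc_orbit g &
     exists S : {set T}, clique h S /\ #|S| = k) ->
  k - 1 <= lambda g.
Proof.
move=> _ k_gt0 [h hg [S [cS Sk]]]; subst k.
have [v vS] : exists v, v \in S by apply/set0Pn; rewrite -card_gt0; exact: k_gt0.
have -> : #|S| - 1 = #|S :\ v| by rewrite (cardsD1 v S) vS add1n subn1.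
apply: leq_trans (alpha_leq_lambda (lc_orbit_lc v hg)).
exact/independent_leq_alpha/lc_clique_independent.
Qed.
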